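(* Let $q=p^h$ with $p$ an odd prime. In ${\rm PG}(4,q)$ with homogeneous coordinates $(X_1,\dots,X_5)$, let $\pi$ be the plane $X_4=X_5=0$, let $\ell$ be the line $X_3=X_4=X_5=0$, let $\omega$ be a primitive element of ${\rm GF}(q)$, and for $1\le i\le q+1$ let $\Pi_i$ be the solid with equation $X_4=\omega^{i-1}X_5$ if $1\le i\le q-1$, $X_4=0$ if $i=q$, and $X_5=0$ if $i=q+1$. Let $a,b,c\in{\rm GF}(q)$ be such that $X^3+aX^2+bX+c$ is irreducible over ${\rm GF}(q)$, and let $G=\{M_{r,s,t}: r,s,t\in{\rm GF}(q)\}$ where $$M_{r,s,t}=\begin{pmatrix}1&0&r&r^2-ar+s&t\\0&1&s&2rs-t&s^2+bs-cr\\0&0&1&2r&2s\\0&0&0&1&0\\0&0&0&0&1\end{pmatrix},$$ acting on the points of ${\rm PG}(4,q)$ (written as column vectors) by left multiplication. Then $G$ has exactly $2q+3$ orbits on the points of ${\rm PG}(4,q)$, namely: (a) $q+1$ orbits of size one, each consisting of a single point of $\ell$; (b) one orbit of size $q^2$, consisting of the points of $\pi\setminus\ell$; (c) $q+1$ orbits of size $q^3$, namely the sets $\Pi_i\setminus\pi$, $1\le i\le q+1$. *)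

From HB Require Import structures.
From mathcomp Require Import all_boot all_algebra all_field.
Set Implicit Arguments. Unset Strict Implicit. Unset Printing Implicit Defensive.
Import GRing.Theory.
Local Open Scope ring_scope.

(* PG(4,q) over a finite field F: vectors are column vectors 'cV[F]_5,
   coordinates X_1..X_5 are the rows 0..4.  A projective point is
   represented as the set of all nonzero scalar multiples of a nonzero vector. *)
Section PG4.
Variable F : finFieldType.

Definition pt (v : 'cV[F]_5) : {set 'cV[F]_5} :=
  [set k *: v | k in [set k : F | k != 0]].

Definition PGpoints : {set {set 'cV[F]_5}} :=
  [set pt v | v in [set v : 'cV[F]_5 | v != 0]].

Definition ptsOf (P : pred 'cV[F]_5) : {set {set 'cV[F]_5}} :=
  [set X in PGpoints | [forall v in X, P v]].

Definition X (k : nat) (v : 'cV[F]_5) : F := v (inord k.-1) 0.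

Definition piPlane := ptsOf (fun v => (X 4 v == 0) && (X 5 v == 0)).
Definition ellLine :=
  ptsOf (fun v => [&& X 3 v == 0, X 4 v == 0 & X 5 v == 0]).

(* Pi_i for i = 1..q+1, indexed here by j = i-1 : 'I_(q+1) *)
Definition Pisolid (w : F) (j : 'I_#|F|.+1) : {set {set 'cV[F]_5}} :=
  if ((j : nat) < #|F| - 1)%N then ptsOf (fun v => X 4 v == w ^+ j * X 5 v)
  else if (j : nat) == (#|F| - 1)%N then ptsOf (fun v => X 4 v == 0)
  else ptsOf (fun v => X 5 v == 0).

Definition Mrows (a b c r s t : F) : seq (seq F) :=
  [:: [:: 1; 0; r; r ^+ 2 - a * r + s; t];
      [:: 0; 1; s; 2 * r * s - t; s ^+ 2 + b * s - c * r];
      [:: 0; 0; 1; 2 * r; 2 * s];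
      [:: 0; 0; 0; 1; 0];
      [:: 0; 0; 0; 0; 1]].

Definition M (a b c r s t : F) : 'M[F]_5 :=
  \matrix_(i < 5, j < 5) nth 0 (nth [::] (Mrows a b c r s t) i) j.

Definition actPt (g : 'M[F]_5) (P : {set 'cV[F]_5}) : {set 'cV[F]_5} :=
  [set g *m v | v in P].

Definition orbitG (a b c : F) (P : {set 'cV[F]_5}) : {set {set 'cV[F]_5}} :=
  [set actPt (M a b c x.1.1 x.1.2 x.2) P | x : F * F * F].

Definition orbitsG (a b c : F) : {set {set {set 'cV[F]_5}}} :=
  [set orbitG a b c P | P in PGpoints].

End PG4.

From HB Require Import structures.
From mathcomp Require Import all_boot all_algebra all_field.
From mathcomp Require Import ring zify.
Import GRing.Theory.
Local Open Scope ring_scope.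
Set Implicit Arguments. Unset Strict Implicit. Unset Printing Implicit Defensive.

(* Every M_{r,s,t} fixes X4 and X5 and maps X3 to X3 + 2 r X4 + 2 s X5, so points of
   ell are fixed, and on pi \ ell the group acts by the translations
   (X1, X2) |-> (X1 + r X3, X2 + s X3), transitively.  Off pi, the ratio X4 : X5,
   i.e. the solid Pi_i through pi containing the point, is invariant, and for a
   fixed vector (X4, X5) <> 0 every choice of (X1, X2, X3) is reached: solving for
   r, s, t only requires dividing by 2 (p is odd) and by the value of the
   irreducible cubic at X4 / X5. *)

Lemma two_neq0_pchar_odd (F : fieldType) p : p \in [pchar F] -> odd p -> (2 : F) != 0.
Proof.
move=> pcharFp; apply: contraTN => two0.
suff /eqP-> : p == 2%N by [].
by rewrite -dvdn_prime2 ?(pcharf_prime pcharFp) // (dvdn_pcharf pcharFp).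
Qed.

Lemma size_irredp_root (F : fieldType) (p : {poly F}) x :
  irreducible_poly p -> root p x -> size p = 2.
Proof.
move=> irr_p; rewrite root_factor_theorem => /(irredp_XsubCP irr_p)[] /eqp_size.
  by rewrite size_XsubC size_poly1.
by rewrite size_XsubC.
Qed.

Lemma cubic_irredp_neq0 (F : fieldType) (a b c m : F) :
  irreducible_poly ('X^3 + a%:P * 'X^2 + b%:P * 'X + c%:P) ->
  m ^+ 3 + a * m ^+ 2 + b * m + c != 0.
Proof.
set cubic := _ + c%:P => irr; apply/negP => /eqP cubic_m0.
have /(size_irredp_root irr) size2 : root cubic m.
  by rewrite rootE !hornerE -cubic_m0 expr2 mulrA.
have : cubic`_3 = 0 by rewrite nth_default ?size2.
by move/eqP; rewrite !coefE /= !mulr0 !addr0 oner_eq0.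
Qed.

Lemma cardsU_disjoint (T : finType) (A B : {set T}) :
  [disjoint A & B] -> #|A :|: B| = (#|A| + #|B|)%N.
Proof. by move=> AB; rewrite cardsU disjoint_setI0 // cards0 subn0. Qed.

Lemma disjoint_card_neq (T : finType) (A B : {set {set T}}) :
  (forall X Y, X \in A -> Y \in B -> #|X| != #|Y|) -> [disjoint A & B].
Proof.
move=> neqAB; apply/pred0P => X /=; apply/negP => /andP[XA XB].
by have := neqAB X X XA XB; rewrite eqxx.
Qed.

Section Coordinates.
Variable F : finFieldType.
Implicit Types (k : F) (v : 'cV[F]_5).

Definition col5 (x1 x2 x3 x4 x5 : F) : 'cV[F]_5 :=
  \col_(i < 5) nth 0 [:: x1; x2; x3; x4; x5] i.

Lemma X1_col5 x1 x2 x3 x4 x5 : X 1 (col5 x1 x2 x3 x4 x5) = x1.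
Proof. by rewrite /X mxE inordK. Qed.
Lemma X2_col5 x1 x2 x3 x4 x5 : X 2 (col5 x1 x2 x3 x4 x5) = x2.
Proof. by rewrite /X mxE inordK. Qed.
Lemma X3_col5 x1 x2 x3 x4 x5 : X 3 (col5 x1 x2 x3 x4 x5) = x3.
Proof. by rewrite /X mxE inordK. Qed.
Lemma X4_col5 x1 x2 x3 x4 x5 : X 4 (col5 x1 x2 x3 x4 x5) = x4.
Proof. by rewrite /X mxE inordK. Qed.
Lemma X5_col5 x1 x2 x3 x4 x5 : X 5 (col5 x1 x2 x3 x4 x5) = x5.
Proof. by rewrite /X mxE inordK. Qed.
Definition col5E := (X1_col5, X2_col5, X3_col5, X4_col5, X5_col5).

Lemma XZ i k v : X i (k *: v) = k * X i v.
Proof. by rewrite /X mxE. Qed.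

Lemma col5_eta v : v = col5 (X 1 v) (X 2 v) (X 3 v) (X 4 v) (X 5 v).
Proof.
apply/matrixP => i j; rewrite ord1 mxE /X.
by case: i => [[|[|[|[|[|i]]]]] Hi] //=; congr (v _ _); apply/val_inj; rewrite /= inordK.
Qed.

Lemma col5_inj x1 x2 x3 x4 x5 y1 y2 y3 y4 y5 :
  col5 x1 x2 x3 x4 x5 = col5 y1 y2 y3 y4 y5 ->
  [/\ x1 = y1, x2 = y2, x3 = y3, x4 = y4 & x5 = y5].
Proof.
move=> E; split; [move: (congr1 (X 1) E) | move: (congr1 (X 2) E) |
  move: (congr1 (X 3) E) | move: (congr1 (X 4) E) | move: (congr1 (X 5) E)];
  by rewrite !col5E.
Qed.

Lemma col5_0 : col5 0 0 0 0 0 = 0.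
Proof. by apply/matrixP => i j; rewrite !mxE; case: i => [[|[|[|[|[|i]]]]] Hi]. Qed.

Lemma col5_eq0 x1 x2 x3 x4 x5 :
  (col5 x1 x2 x3 x4 x5 == 0) = [&& x1 == 0, x2 == 0, x3 == 0, x4 == 0 & x5 == 0].
Proof.
rewrite -col5_0; apply/eqP/and5P => [/col5_inj[-> -> -> -> ->] | ]; first by split.
by case=> /eqP-> /eqP-> /eqP-> /eqP-> /eqP->.
Qed.

Lemma col5_neq0 x1 x2 x3 x4 x5 : (x4 != 0) || (x5 != 0) -> col5 x1 x2 x3 x4 x5 != 0.
Proof. by rewrite col5_eq0; case: (x4 == 0); case: (x5 == 0); rewrite ?andbF. Qed.

Lemma scale_col5 k x1 x2 x3 x4 x5 :
  k *: col5 x1 x2 x3 x4 x5 = col5 (k * x1) (k * x2) (k * x3) (k * x4) (k * x5).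
Proof. by apply/matrixP => i j; rewrite !mxE; case: i => [[|[|[|[|[|i]]]]] Hi]. Qed.

Lemma mul_M_col5 a b c r s t x1 x2 x3 x4 x5 :
  M a b c r s t *m col5 x1 x2 x3 x4 x5 =
  col5 (x1 + r * x3 + (r ^+ 2 - a * r + s) * x4 + t * x5)
       (x2 + s * x3 + (2 * r * s - t) * x4 + (s ^+ 2 + b * s - c * r) * x5)
       (x3 + 2 * r * x4 + 2 * s * x5) x4 x5.
Proof.
apply/matrixP => i j; rewrite !mxE !big_ord_recr big_ord0 /= !mxE /=.
by case: i => [[|[|[|[|[|i]]]]] Hi] //=; ring.
Qed.

End Coordinates.

Section ProjectivePoints.
Variable F : finFieldType.
Implicit Types (k : F) (u v : 'cV[F]_5) (P : {set 'cV[F]_5}).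

Lemma mem_pt u v : (u \in pt v) = [exists k, (k != 0) && (u == k *: v)].
Proof.
apply/imsetP/existsP => [[k]|[k /andP[k0 /eqP->]]]; last by exists k; rewrite ?inE.
by rewrite inE => k0 ->; exists k; rewrite k0 eqxx.
Qed.

Lemma pt_self v : v \in pt v.
Proof. by rewrite mem_pt; apply/existsP; exists 1; rewrite oner_eq0 scale1r eqxx. Qed.

Lemma ptZ k v : k != 0 -> pt (k *: v) = pt v.
Proof.
move=> k0; apply/setP => u; rewrite !mem_pt; apply/existsP/existsP.
  case=> l /andP[l0 /eqP->]; exists (l * k); rewrite mulf_neq0 //= scalerA //.
case=> l /andP[l0 /eqP->]; exists (l / k); rewrite mulf_neq0 ?invr_eq0 //=.
by rewrite scalerA divfK.
Qed.

Lemma pt_eq_scale u v : pt u = pt v -> exists2 k, k != 0 & v = k *: u.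
Proof.
by move=> Euv; have := pt_self v; rewrite -Euv mem_pt => /existsP[k /andP[k0 /eqP Ev]]; exists k.
Qed.

Lemma pt_inj_coord i u v : pt u = pt v -> X i u = X i v -> X i u != 0 -> u = v.
Proof.
case/pt_eq_scale=> k _ ->; rewrite XZ => Ei ui0.
have -> : k = 1 by apply: (mulIf ui0); rewrite mul1r -Ei.
by rewrite scale1r.
Qed.

Lemma pt_PGpoints v : (pt v \in PGpoints F) = (v != 0).
Proof.
apply/imsetP/idP => [[u] | v0]; last by exists v; rewrite ?inE.
rewrite inE => u0 /pt_eq_scale[k _ Eu]; apply: contraNneq u0 => v0.
by rewrite Eu v0 scaler0.
Qed.

Lemma PGpoints_col5 P : P \in PGpoints F ->
  exists x1 x2 x3 x4 x5, col5 x1 x2 x3 x4 x5 != 0 /\ P = pt (col5 x1 x2 x3 x4 x5).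
Proof.
case/imsetP => u; rewrite inE (col5_eta u) => u0 ->.
by do 5 eexists; split; first exact: u0.
Qed.

Definition homogeneous (Pr : pred 'cV[F]_5) := forall k v, k != 0 -> Pr (k *: v) = Pr v.

Lemma ptsOf_PGpoints Pr P : P \in ptsOf Pr -> P \in PGpoints F.
Proof. by rewrite inE => /andP[]. Qed.

Lemma mem_ptsOf Pr v : homogeneous Pr -> (pt v \in ptsOf Pr) = (v != 0) && Pr v.
Proof.
move=> homPr; rewrite inE pt_PGpoints; case: (v != 0) => //=.
apply/forallP/idP => [/(_ v) | Prv u]; first by rewrite pt_self.
by apply/implyP; rewrite mem_pt => /existsP[k /andP[k0 /eqP->]]; rewrite homPr.
Qed.

Lemma actPt_pt g v : actPt g (pt v) = pt (g *m v).
Proof. by rewrite /actPt -imset_comp; apply: eq_imset => k /=; rewrite scalemxAr. Qed.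

Lemma orbitG_pt a b c v :
  orbitG a b c (pt v) = [set pt (M a b c x.1.1 x.1.2 x.2 *m v) | x : F * F * F].
Proof. by apply: eq_imset => x; rewrite actPt_pt. Qed.

End ProjectivePoints.

Section Transitivity.
Variables (F : finFieldType) (a b c : F).
Hypothesis two_neq0 : (2 : F) != 0.
Hypothesis cubic_neq0 : forall m : F, m ^+ 3 + a * m ^+ 2 + b * m + c != 0.

(* With m = x4 / x5, the X3-equation fixes u = r m + s and the X1-equation fixes t;
   substituting both into the X2-equation, the r^2 terms cancel and what is left is
   -(m^3 + a m^2 + b m + c) r = (terms free of r). *)
Lemma M_fibre_transitive_X5_neq0 x4 x5 : x5 != 0 ->
  forall y1 y2 y3 z1 z2 z3, exists r s t,
    M a b c r s t *m col5 y1 y2 y3 x4 x5 = col5 z1 z2 z3 x4 x5.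
Proof.
move=> x5_neq0 y1 y2 y3 z1 z2 z3.
pose m := x4 / x5.
pose u := (z3 / x5 - y3 / x5) / 2.
pose t0 := z1 / x5 - y1 / x5 - u * m.
pose y20 := y2 / x5 + u * (y3 / x5) - t0 * m + u ^+ 2 + b * u.
pose r := (y20 - z2 / x5) / (m ^+ 3 + a * m ^+ 2 + b * m + c).
pose s := u - r * m.
pose t := z1 / x5 - y1 / x5 - r * (y3 / x5) - (r ^+ 2 - a * r + s) * m.
have cubic_hom_neq0 :
    x4 ^+ 3 + a * x4 ^+ 2 * x5 + b * x4 * x5 ^+ 2 + c * (x5 ^+ 2 * x5) != 0.
  have -> : x4 ^+ 3 + a * x4 ^+ 2 * x5 + b * x4 * x5 ^+ 2 + c * (x5 ^+ 2 * x5)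
      = x5 ^+ 3 * (m ^+ 3 + a * m ^+ 2 + b * m + c) by rewrite /m; field.
  by rewrite mulf_neq0 ?expf_neq0.
exists r, s, t; rewrite mul_M_col5; congr col5;
  by rewrite /t /s /r /y20 /t0 /u /m; field; rewrite ?two_neq0 ?x5_neq0 ?cubic_hom_neq0.
Qed.

Lemma M_fibre_transitive_X5_eq0 x4 : x4 != 0 ->
  forall y1 y2 y3 z1 z2 z3, exists r s t,
    M a b c r s t *m col5 y1 y2 y3 x4 0 = col5 z1 z2 z3 x4 0.
Proof.
move=> x4_neq0 y1 y2 y3 z1 z2 z3.
pose r := (z3 / x4 - y3 / x4) / 2.
pose s := z1 / x4 - y1 / x4 - r * (y3 / x4) - r ^+ 2 + a * r.
pose t := y2 / x4 + s * (y3 / x4) + 2 * r * s - z2 / x4.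
exists r, s, t; rewrite mul_M_col5; congr col5;
  by rewrite /t /s /r; field; rewrite ?two_neq0 ?x4_neq0.
Qed.

Lemma M_fibre_transitive x4 x5 : (x4 != 0) || (x5 != 0) ->
  forall y1 y2 y3 z1 z2 z3, exists r s t,
    M a b c r s t *m col5 y1 y2 y3 x4 x5 = col5 z1 z2 z3 x4 x5.
Proof.
have [-> | x5_neq0] := eqVneq x5 0; last by move=> _; apply: M_fibre_transitive_X5_neq0.
by rewrite orbF; apply: M_fibre_transitive_X5_eq0.
Qed.

End Transitivity.

Section Subspaces.
Variable F : finFieldType.

Lemma mem_ellLine_col5 x1 x2 x3 x4 x5 :
  (pt (col5 x1 x2 x3 x4 x5) \in ellLine F) =
  (col5 x1 x2 x3 x4 x5 != 0) && [&& x3 == 0, x4 == 0 & x5 == 0].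
Proof.
rewrite mem_ptsOf ?col5E // => k v k0.
by rewrite !XZ !mulf_eq0 (negbTE k0).
Qed.

Lemma mem_piPlane_col5 x1 x2 x3 x4 x5 :
  (pt (col5 x1 x2 x3 x4 x5) \in piPlane F) =
  (col5 x1 x2 x3 x4 x5 != 0) && (x4 == 0) && (x5 == 0).
Proof.
rewrite mem_ptsOf ?col5E ?andbA // => k v k0.
by rewrite !XZ !mulf_eq0 (negbTE k0).
Qed.

Definition on_solid (w : F) (j : 'I_#|F|.+1) (y4 y5 : F) : bool :=
  if (j < #|F| - 1)%N then y4 == w ^+ j * y5
  else if j == (#|F| - 1)%N :> nat then y4 == 0 else y5 == 0.

Lemma mem_Pisolid_col5 w j x1 x2 x3 x4 x5 :
  (pt (col5 x1 x2 x3 x4 x5) \in Pisolid w j) =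
  (col5 x1 x2 x3 x4 x5 != 0) && on_solid w j x4 x5.
Proof.
have -> : Pisolid w j = ptsOf (fun v => on_solid w j (X 4 v) (X 5 v)).
  by rewrite /Pisolid /on_solid; case: ifP => _ //; case: ifP.
rewrite mem_ptsOf ?col5E // => k v k0.
by rewrite /on_solid !XZ !mulf_eq0 (negbTE k0) mulrCA (inj_eq (mulfI k0)).
Qed.

Lemma Pisolid_PGpoints w j P : P \in Pisolid w j -> P \in PGpoints F.
Proof. by rewrite /Pisolid; case: ifP => _; [|case: ifP => _]; apply: ptsOf_PGpoints. Qed.

Lemma on_solid_proportional w j y4 y5 x4 x5 :
  on_solid w j y4 y5 -> on_solid w j x4 x5 ->
  (y4 != 0) || (y5 != 0) -> (x4 != 0) || (x5 != 0) ->
  exists2 k, k != 0 & (k * y4 = x4 /\ k * y5 = x5).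
Proof.
rewrite /on_solid; case: ifP => _; last case: ifP => _.
- move=> /eqP-> /eqP->.
  have [->|y5_neq0] := eqVneq y5 0; first by rewrite mulr0 eqxx.
  have [->|x5_neq0] := eqVneq x5 0; first by rewrite mulr0 eqxx.
  move=> _ _; exists (x5 / y5); first by rewrite mulf_neq0 ?invr_eq0.
  by rewrite mulrCA divfK.
- move=> /eqP-> /eqP->; rewrite !eqxx /= => y5_neq0 x5_neq0.
  exists (x5 / y5); first by rewrite mulf_neq0 ?invr_eq0.
  by rewrite mulr0 divfK.
- move=> /eqP-> /eqP->; rewrite !eqxx !orbF => y4_neq0 x4_neq0.
  exists (x4 / y4); first by rewrite mulf_neq0 ?invr_eq0.
  by rewrite mulr0 divfK.
Qed.

End Subspaces.

Section SolidDirections.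
Variables (F : finFieldType) (w : F).
Hypothesis w_prim : (#|F|.-1).-primitive_root w.

Definition solid_dir (j : 'I_#|F|.+1) : F * F :=
  if (j < #|F| - 1)%N then (w ^+ j, 1)
  else if j == (#|F| - 1)%N :> nat then (0, 1) else (1, 0).

Lemma on_solid_dir j : on_solid w j (solid_dir j).1 (solid_dir j).2.
Proof.
rewrite /on_solid /solid_dir; case: (j < #|F| - 1)%N => /=; first by rewrite mulr1.
by case: (j == _ :> nat).
Qed.

Lemma solid_dir_neq0 j : ((solid_dir j).1 != 0) || ((solid_dir j).2 != 0).
Proof.
rewrite /solid_dir; case: ifP => _ /=; first by rewrite oner_eq0 orbT.
by case: ifP; rewrite /= oner_eq0 ?orbT.
Qed.

Lemma w_neq0 : w != 0.
Proof. by rewrite (prim_root_eq0 w_prim) -lt0n (prim_order_gt0 w_prim). Qed.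

Lemma on_solid_dir_uniq k j : on_solid w k (solid_dir j).1 (solid_dir j).2 -> k = j.
Proof.
case: k j => [k k_le] [j j_le] on_k; apply: val_inj => /=; move: on_k.
rewrite /on_solid /solid_dir /=; move: k_le j_le (finNzRing_gt1 F).
(* [set] merges the syntactically different instances of [#|F|], which [lia]
   would otherwise treat as unrelated atoms. *)
set q := #|F| => k_le j_le q_gt1.
have lt_pred i : (i < q - 1)%N -> (i < q.-1)%N by rewrite subn1.
case: (ltnP k (q - 1)) => k_lt; case: (ltnP j (q - 1)) => j_lt /=.
- rewrite mulr1 eq_sym (eq_prim_root_expr w_prim) !modn_small ?lt_pred //.
  by move/eqP.
- case: (j == _) => /=; rewrite ?mulr1 ?mulr0 ?oner_eq0 //.
  by rewrite eq_sym expf_eq0 (negbTE w_neq0) andbF.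
- by case: (k == _); rewrite ?expf_eq0 ?(negbTE w_neq0) ?andbF ?oner_eq0.
- case: (k =P (q - 1)%N) => k_eq; case: (j =P (q - 1)%N) => j_eq /=;
    rewrite ?eqxx ?oner_eq0 // => _; lia.
Qed.

Lemma on_solidP y4 y5 : exists j, on_solid w j y4 y5.
Proof.
rewrite /on_solid; move: (finNzRing_gt1 F); set q := #|F| => q_gt1.
have [-> | y5_neq0] := eqVneq y5 0.
  by exists ord_max; rewrite /= !ifN ?eqxx //; apply/negP; lia.
have [-> | y4_neq0] := eqVneq y4 0.
  by exists (inord (#|F| - 1)); rewrite inordK ?ltnn ?eqxx //; lia.
have m_unity : (y4 / y5) ^+ #|F|.-1 = 1.
  apply: (mulIf (_ : y4 / y5 != 0)); first by rewrite mulf_neq0 ?invr_eq0.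
  by rewrite mul1r -exprSr prednK ?expf_card //; lia.
have [i Ei] := prim_rootP w_prim m_unity.
exists (inord i); rewrite inordK; last by have := ltn_ord i; lia.
by rewrite ifT -?Ei ?divfK //; have := ltn_ord i; lia.
Qed.

End SolidDirections.

Section Parametrisations.
Variable F : finFieldType.

Definition ell_point (o : option F) : {set 'cV[F]_5} :=
  pt (if o is Some x then col5 x 1 0 0 0 else col5 1 0 0 0 0).

Lemma ellLine_param : ellLine F = [set ell_point o | o : option F].
Proof.
apply/setP => P; apply/idP/imsetP => [P_ell | [[x|] _ ->]]; last first.
- by rewrite mem_ellLine_col5 col5_eq0 oner_eq0 !eqxx.
- by rewrite mem_ellLine_col5 col5_eq0 oner_eq0 !eqxx !andbF.
have [y1 [y2 [y3 [y4 [y5 [y_neq0 PE]]]]]] := PGpoints_col5 (ptsOf_PGpoints P_ell).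
move: P_ell y_neq0; rewrite PE mem_ellLine_col5 => /andP[_ /and3P[/eqP-> /eqP-> /eqP->]].
have [-> | y2_neq0] := eqVneq y2 0.
  rewrite col5_eq0 !eqxx !andbT => y1_neq0; exists None => //.
  by rewrite /ell_point -[RHS](ptZ _ y1_neq0) scale_col5 !mulr0 mulr1.
move=> _; exists (Some (y1 / y2)) => //.
by rewrite /ell_point -[RHS](ptZ _ y2_neq0) scale_col5 !mulr0 mulr1 mulrC divfK.
Qed.

Lemma card_ellLine : #|ellLine F| = #|F|.+1.
Proof.
rewrite ellLine_param card_imset ?card_option // => [[x|] [y|]] //= /pt_eq_scale[k k0];
  rewrite scale_col5 => /col5_inj[]; rewrite ?mulr0 ?mulr1.
- by move=> -> <-; rewrite mul1r.
- by move=> _ /eqP; rewrite eq_sym (negbTE k0).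
- by move=> _ /eqP; rewrite oner_eq0.
Qed.

Lemma piPlane_minus_ell_param :
  piPlane F :\: ellLine F = [set pt (col5 x.1 x.2 1 0 0) | x : F * F].
Proof.
apply/setP => P; apply/idP/imsetP => [| [x _ ->]]; last first.
  by rewrite inE mem_ellLine_col5 mem_piPlane_col5 col5_eq0 oner_eq0 !eqxx !andbF.
rewrite inE => /andP[P_ell P_pi].
have [y1 [y2 [y3 [y4 [y5 [y_neq0 PE]]]]]] := PGpoints_col5 (ptsOf_PGpoints P_pi).
move: P_ell P_pi; rewrite PE mem_ellLine_col5 mem_piPlane_col5 y_neq0 /=.
move=> + /andP[/eqP y4_0 /eqP y5_0]; rewrite y4_0 y5_0 !eqxx !andbT => y3_neq0.
exists (y1 / y3, y2 / y3) => //=.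
by rewrite -[RHS](ptZ _ y3_neq0) scale_col5 !mulr0 mulr1 ![y3 * _]mulrC !divfK.
Qed.

Lemma card_piPlane_minus_ell : #|piPlane F :\: ellLine F| = (#|F| ^ 2)%N.
Proof.
rewrite piPlane_minus_ell_param card_imset ?card_prod ?mulnn //.
move=> [x1 x2] [y1 y2] /(pt_inj_coord (i := 3)); rewrite !col5E oner_eq0.
by move=> /(_ erefl isT) /col5_inj[/= -> ->].
Qed.

Variables (w : F) (j : 'I_#|F|.+1).

Lemma Pisolid_minus_pi_param : Pisolid w j :\: piPlane F =
  [set pt (col5 x.1.1 x.1.2 x.2 (solid_dir w j).1 (solid_dir w j).2) | x : F * F * F].
Proof.
apply/setP => P; apply/idP/imsetP => [| [x _ ->]]; last first.
  rewrite inE mem_Pisolid_col5 mem_piPlane_col5 on_solid_dir col5_neq0 ?solid_dir_neq0 //=.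
  by rewrite andbT negb_and solid_dir_neq0.
rewrite inE => /andP[P_pi P_solid].
have [y1 [y2 [y3 [y4 [y5 [y_neq0 PE]]]]]] := PGpoints_col5 (Pisolid_PGpoints P_solid).
move: P_pi P_solid; rewrite PE mem_Pisolid_col5 mem_piPlane_col5 y_neq0 /= => y45_neq0 on_y.
have [|k k0 [E4 E5]] := on_solid_proportional on_y (on_solid_dir w j) _ (solid_dir_neq0 w j).
  by rewrite -negb_and.
by exists ((k * y1, k * y2), k * y3) => //=; rewrite -[LHS](ptZ _ k0) scale_col5 E4 E5.
Qed.

Lemma card_Pisolid_minus_pi : #|Pisolid w j :\: piPlane F| = (#|F| ^ 3)%N.
Proof.
rewrite Pisolid_minus_pi_param card_imset; first by rewrite !card_prod mulnn -expnSr.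
move=> [[x1 x2] x3] [[y1 y2] y3] E.
have [dir4_0 | dir4_neq0] := eqVneq (solid_dir w j).1 0.
  have := solid_dir_neq0 w j; rewrite dir4_0 eqxx /= => dir5_neq0.
  have := pt_inj_coord (i := 5) E; rewrite !col5E => /(_ erefl dir5_neq0).
  by case/col5_inj => /= -> -> ->.
have := pt_inj_coord (i := 4) E; rewrite !col5E => /(_ erefl dir4_neq0).
by case/col5_inj => /= -> -> ->.
Qed.

End Parametrisations.

Section Orbits.
Variables (F : finFieldType) (a b c : F).

Lemma orbitG_ellLine x1 x2 :
  orbitG a b c (pt (col5 x1 x2 0 0 0)) = [set pt (col5 x1 x2 0 0 0)].
Proof.
rewrite orbitG_pt; apply/setP => Q; rewrite inE; apply/imsetP/eqP => [[x _ ->] | ->].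
  by rewrite mul_M_col5 !mulr0 !addr0.
by exists (0, 0, 0); rewrite // mul_M_col5 !mulr0 !addr0.
Qed.

Lemma orbitG_piPlane x1 x2 x3 : x3 != 0 ->
  orbitG a b c (pt (col5 x1 x2 x3 0 0)) = piPlane F :\: ellLine F.
Proof.
move=> x3_neq0; rewrite orbitG_pt; apply/setP => Q; apply/imsetP/idP => [[x _ ->] |].
  rewrite mul_M_col5 !mulr0 !addr0 inE mem_ellLine_col5 mem_piPlane_col5.
  by rewrite col5_eq0 (negbTE x3_neq0) !eqxx !andbF.
rewrite piPlane_minus_ell_param => /imsetP[z _ ->].
exists ((z.1 - x1 / x3, z.2 - x2 / x3), 0) => //=.
rewrite mul_M_col5 !mulr0 !addr0 -[LHS](ptZ _ x3_neq0) scale_col5 !mulr0 mulr1.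
by congr (pt (col5 _ _ _ _ _)); field.
Qed.

Hypothesis two_neq0 : (2 : F) != 0.
Hypothesis cubic_neq0 : forall m : F, m ^+ 3 + a * m ^+ 2 + b * m + c != 0.

Lemma orbitG_Pisolid w j x1 x2 x3 x4 x5 :
  on_solid w j x4 x5 -> (x4 != 0) || (x5 != 0) ->
  orbitG a b c (pt (col5 x1 x2 x3 x4 x5)) = Pisolid w j :\: piPlane F.
Proof.
move=> on_x x45_neq0; rewrite orbitG_pt; apply/setP => Q.
apply/imsetP/idP => [[x _ ->] |].
  rewrite mul_M_col5 inE mem_Pisolid_col5 mem_piPlane_col5 on_x col5_neq0 //=.
  by rewrite andbT negb_and.
rewrite Pisolid_minus_pi_param => /imsetP[z _ ->].
have [k k0 [E4 E5]] :=
  on_solid_proportional (on_solid_dir w j) on_x (solid_dir_neq0 w j) x45_neq0.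
have [r [s [t Mx]]] := M_fibre_transitive two_neq0 cubic_neq0 x45_neq0
  x1 x2 x3 (k * z.1.1) (k * z.1.2) (k * z.2).
by exists (r, s, t) => //=; rewrite Mx -E4 -E5 -scale_col5 ptZ.
Qed.

End Orbits.

Section OrbitFamilies.
Variables (F : finFieldType) (w : F) (a b c : F).
Hypothesis w_prim : (#|F|.-1).-primitive_root w.
Hypothesis two_neq0 : (2 : F) != 0.
Hypothesis cubic_neq0 : forall m : F, m ^+ 3 + a * m ^+ 2 + b * m + c != 0.

Definition orbit_families : {set {set {set 'cV[F]_5}}} :=
  [set [set P] | P in ellLine F] :|: [set piPlane F :\: ellLine F]
  :|: [set Pisolid w i :\: piPlane F | i : 'I_#|F|.+1].

Lemma orbitG_in_families P : P \in PGpoints F -> orbitG a b c P \in orbit_families.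
Proof.
case/PGpoints_col5 => x1 [x2 [x3 [x4 [x5 [x_neq0 ->]]]]]; rewrite !in_setU.
have [/andP[/eqP x4_0 /eqP x5_0] | x45_neq0] := boolP ((x4 == 0) && (x5 == 0)).
  subst x4 x5; have [x3_0 | x3_neq0] := eqVneq x3 0.
    subst x3; rewrite orbitG_ellLine; apply/orP; left; apply/orP; left.
    by apply/imsetP; exists (pt (col5 x1 x2 0 0 0)); rewrite // mem_ellLine_col5 x_neq0 eqxx.
  by rewrite orbitG_piPlane // in_set1 eqxx orbT.
have [j on_j] := on_solidP w_prim x4 x5.
rewrite (orbitG_Pisolid two_neq0 cubic_neq0 _ _ _ on_j) -?negb_and //.
by apply/orP; right; apply/imsetP; exists j.
Qed.

Lemma families_sub_orbitsG : orbit_families \subset orbitsG a b c.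
Proof.
apply/subsetP => O; rewrite !in_setU in_set1.
case/orP => [/orP[/imsetP[P P_ell ->] | /eqP->] | /imsetP[j _ ->]]; apply/imsetP.
- exists P; first exact: ptsOf_PGpoints P_ell.
  by move: P_ell; rewrite ellLine_param => /imsetP[[x|] _ ->]; rewrite orbitG_ellLine.
- exists (pt (col5 0 0 1 0 0)); first by rewrite pt_PGpoints col5_eq0 oner_eq0 !andbF.
  by rewrite orbitG_piPlane ?oner_eq0.
- exists (pt (col5 0 0 0 (solid_dir w j).1 (solid_dir w j).2)).
    by rewrite pt_PGpoints col5_neq0 ?solid_dir_neq0.
  by rewrite (orbitG_Pisolid two_neq0 cubic_neq0 _ _ _ (on_solid_dir w j) (solid_dir_neq0 w j)).
Qed.

Lemma orbitsG_families : orbitsG a b c = orbit_families.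
Proof.
apply/eqP; rewrite eqEsubset families_sub_orbitsG andbT.
by apply/subsetP => O /imsetP[P P_PG ->]; apply: orbitG_in_families.
Qed.

Lemma card_Pisolid_family : #|[set Pisolid w i :\: piPlane F | i : 'I_#|F|.+1]| = #|F|.+1.
Proof.
rewrite card_imset ?card_ord // => i j Eij.
have : pt (col5 0 0 0 (solid_dir w i).1 (solid_dir w i).2) \in Pisolid w j :\: piPlane F.
  by rewrite -Eij Pisolid_minus_pi_param; apply/imsetP; exists (0, 0, 0).
by rewrite inE mem_Pisolid_col5 => /andP[_ /andP[_ /(on_solid_dir_uniq w_prim)]].
Qed.

Lemma card_orbit_families : #|orbit_families| = (2 * #|F| + 3)%N.
Proof.
have q_gt1 : (1 < #|F|)%N := finNzRing_gt1 F.
have [q2_neq1 q3_neq1 q3_neq_q2] : [/\ #|F| ^ 2 != 1, #|F| ^ 3 != 1 & #|F| ^ 3 != #|F| ^ 2]%N.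
  by rewrite !expnS expn0 !muln1; split; apply/eqP; nia.
rewrite /orbit_families !cardsU_disjoint ?cards1 ?card_Pisolid_family.
- by rewrite card_imset ?card_ellLine; [lia | apply: set1_inj].
- apply: disjoint_card_neq => X Y /imsetP[P _ ->] /set1P->.
  by rewrite cards1 card_piPlane_minus_ell eq_sym.
- apply: disjoint_card_neq => X Y; rewrite in_setU in_set1.
  case/orP=> [/imsetP[P _ ->] | /eqP->] /imsetP[j _ ->];
    by rewrite card_Pisolid_minus_pi ?cards1 ?card_piPlane_minus_ell eq_sym.
Qed.

End OrbitFamilies.

Theorem lemma2p3 (F : finFieldType) (p h : nat)
  (Hp : prime p) (Hodd : odd p) (Hh : (0 < h)%N) (HF : #|F| = (p ^ h)%N)
  (w : F) (Hw : (#|F|.-1).-primitive_root w)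
  (a b c : F)
  (Hirr : irreducible_poly ('X^3 + a%:P * 'X^2 + b%:P * 'X + c%:P)) :
  let q := #|F| in
  #|orbitsG a b c| = (2 * q + 3)%N /\
  orbitsG a b c =
    [set [set P] | P in ellLine F]
    :|: [set piPlane F :\: ellLine F]
    :|: [set Pisolid w i :\: piPlane F | i : 'I_q.+1] /\
  #|ellLine F| = q.+1 /\
  (forall P, P \in ellLine F -> #|[set P]| = 1%N) /\
  #|[set Pisolid w i :\: piPlane F | i : 'I_q.+1]| = q.+1 /\
  #|piPlane F :\: ellLine F| = (q ^ 2)%N /\
  (forall i : 'I_q.+1, #|Pisolid w i :\: piPlane F| = (q ^ 3)%N).
Proof.
move=> q.
have two_neq0 := two_neq0_pchar_odd (card_finPcharP HF Hp) Hodd.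
have cubic_neq0 m := cubic_irredp_neq0 m Hirr.
have orbitsE := orbitsG_families Hw two_neq0 cubic_neq0.
split; first by rewrite orbitsE card_orbit_families.
split; first exact: orbitsE.
split; first exact: card_ellLine.
split; first by move=> P _; rewrite cards1.
split; first exact: card_Pisolid_family.
split; first exact: card_piPlane_minus_ell.
exact: card_Pisolid_minus_pi.
Qed.
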